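(* Let $(H,p)$ be a pivotal Hopf monoid in a symmetric monoidal category $\mathcal C$ and $T=m\circ(p\otimes S):H\to H$. Then: 1. $T\circ T=1_H$; 2. $\Delta\circ T=(T\otimes T)\circ\tau_{H,H}\circ\Delta$ and $\epsilon\circ T=\epsilon$; 3. $T\circ m=m\circ(S^{-1}\otimes T)\circ\tau_{H,H}=m\circ(T\otimes S)\circ\tau_{H,H}$, $T\circ\eta=p$, and $m\circ(T\otimes 1_H)\circ\Delta=p\circ\epsilon=m\circ(1_H\otimes T)\circ\tau_{H,H}\circ\Delta$.
   Context: $\mathcal C$ is a symmetric monoidal category with tensor unit $e$ and symmetry $\tau$. $H$ is a Hopf monoid with multiplication $m$, unit $\eta$, comultiplication $\Delta$, counit $\epsilon$, antipode $S$; $m^{(2)}=m\circ(m\otimes1_H)$. A pivotal structure is $p:e\to H$ with $\Delta\circ p=p\otimes p$, $\epsilon\circ p=1_e$ and $m^{(2)}\circ(1_H\otimes S^2\otimes S)\circ(p\otimes1_H\otimes p)=1_H$; then $S$ is invertible with $S^{-1}=m^{(2)}\circ(1_H\otimes S\otimes S)\circ(p\otimes1_H\otimes p)$. *)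

Set Implicit Arguments.
Set Universe Polymorphism.

Record SymMonCat := {
  Ob :> Type;
  Hom : Ob -> Ob -> Type;
  idm : forall A : Ob, Hom A A;
  comp : forall {A B C : Ob}, Hom B C -> Hom A B -> Hom A C;
  comp_idl : forall A B (f : Hom A B), comp (idm B) f = f;
  comp_idr : forall A B (f : Hom A B), comp f (idm A) = f;
  comp_assoc : forall A B C D (h : Hom C D) (g : Hom B C) (f : Hom A B),
      comp h (comp g f) = comp (comp h g) f;
  tens : Ob -> Ob -> Ob;
  tensm : forall {A B C D : Ob}, Hom A B -> Hom C D -> Hom (tens A C) (tens B D);
  tensm_id : forall A B, tensm (idm A) (idm B) = idm (tens A B);
  tensm_comp : forall A B C A' B' C' (g : Hom B C) (f : Hom A B)
      (g' : Hom B' C') (f' : Hom A' B'),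
      tensm (comp g f) (comp g' f') = comp (tensm g g') (tensm f f');
  unit_ob : Ob;
  assoc : forall A B C, Hom (tens (tens A B) C) (tens A (tens B C));
  assoc_inv : forall A B C, Hom (tens A (tens B C)) (tens (tens A B) C);
  assoc_inv_l : forall A B C, comp (assoc_inv A B C) (assoc A B C) = idm _;
  assoc_inv_r : forall A B C, comp (assoc A B C) (assoc_inv A B C) = idm _;
  assoc_nat : forall A A' B B' C C' (f : Hom A A') (g : Hom B B') (h : Hom C C'),
      comp (assoc A' B' C') (tensm (tensm f g) h)
      = comp (tensm f (tensm g h)) (assoc A B C);
  lunit : forall A, Hom (tens unit_ob A) A;
  lunit_inv : forall A, Hom A (tens unit_ob A);
  lunit_inv_l : forall A, comp (lunit_inv A) (lunit A) = idm _;
  lunit_inv_r : forall A, comp (lunit A) (lunit_inv A) = idm _;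
  lunit_nat : forall A B (f : Hom A B),
      comp f (lunit A) = comp (lunit B) (tensm (idm unit_ob) f);
  runit : forall A, Hom (tens A unit_ob) A;
  runit_inv : forall A, Hom A (tens A unit_ob);
  runit_inv_l : forall A, comp (runit_inv A) (runit A) = idm _;
  runit_inv_r : forall A, comp (runit A) (runit_inv A) = idm _;
  runit_nat : forall A B (f : Hom A B),
      comp f (runit A) = comp (runit B) (tensm f (idm unit_ob));
  pentagon : forall A B C D,
      comp (assoc A B (tens C D)) (assoc (tens A B) C D)
      = comp (tensm (idm A) (assoc B C D))
          (comp (assoc A (tens B C) D) (tensm (assoc A B C) (idm D)));
  triangle : forall A B,
      comp (tensm (idm A) (lunit B)) (assoc A unit_ob B)
      = tensm (runit A) (idm B);
  sym : forall A B, Hom (tens A B) (tens B A);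
  sym_nat : forall A A' B B' (f : Hom A A') (g : Hom B B'),
      comp (sym A' B') (tensm f g) = comp (tensm g f) (sym A B);
  sym_invol : forall A B, comp (sym B A) (sym A B) = idm _;
  hexagon : forall A B C,
      comp (assoc B C A) (comp (sym A (tens B C)) (assoc A B C))
      = comp (tensm (idm B) (sym A C))
          (comp (assoc B A C) (tensm (sym A B) (idm C)))
}.

Arguments idm {s} A.
Arguments comp {s A B C} _ _.
Arguments tens {s} _ _.
Arguments tensm {s A B C D} _ _.
Arguments unit_ob {s}.
Arguments assoc {s} A B C.
Arguments assoc_inv {s} A B C.
Arguments lunit {s} A.
Arguments lunit_inv {s} A.
Arguments runit {s} A.
Arguments runit_inv {s} A.
Arguments sym {s} A B.

Declare Scope cat_scope.
Delimit Scope cat_scope with cat.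
Open Scope cat_scope.
Notation "g ∘ f" := (comp g f) (at level 40, left associativity) : cat_scope.
Notation "f ⊗ g" := (tensm f g) (at level 35) : cat_scope.

Definition mid {C : SymMonCat} (A B X D : C) :
  Hom C (tens (tens A B) (tens X D)) (tens (tens A X) (tens B D)) :=
  assoc_inv A X (tens B D)
  ∘ (idm A ⊗ (assoc X B D ∘ (sym B X ⊗ idm D) ∘ assoc_inv B X D))
  ∘ assoc A B (tens X D).

Record HopfMonoid (C : SymMonCat) (H : C) := {
  hm : Hom C (tens H H) H;
  heta : Hom C unit_ob H;
  hDelta : Hom C H (tens H H);
  heps : Hom C H unit_ob;
  hS : Hom C H H;
  m_assoc : hm ∘ (hm ⊗ idm H) = hm ∘ (idm H ⊗ hm) ∘ assoc H H H;
  m_unitl : hm ∘ (heta ⊗ idm H) = lunit H;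
  m_unitr : hm ∘ (idm H ⊗ heta) = runit H;
  D_coassoc : assoc H H H ∘ (hDelta ⊗ idm H) ∘ hDelta = (idm H ⊗ hDelta) ∘ hDelta;
  D_counitl : (heps ⊗ idm H) ∘ hDelta = lunit_inv H;
  D_counitr : (idm H ⊗ heps) ∘ hDelta = runit_inv H;
  bialg_Dm : hDelta ∘ hm = (hm ⊗ hm) ∘ mid H H H H ∘ (hDelta ⊗ hDelta);
  bialg_em : heps ∘ hm = lunit unit_ob ∘ (heps ⊗ heps);
  bialg_De : hDelta ∘ heta = (heta ⊗ heta) ∘ lunit_inv unit_ob;
  bialg_ee : heps ∘ heta = idm unit_ob;
  antipode_l : hm ∘ (hS ⊗ idm H) ∘ hDelta = heta ∘ heps;
  antipode_r : hm ∘ (idm H ⊗ hS) ∘ hDelta = heta ∘ heps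
}.

Arguments HopfMonoid {C} H.
Arguments hm {C H} _.
Arguments heta {C H} _.
Arguments hDelta {C H} _.
Arguments heps {C H} _.
Arguments hS {C H} _.

Section Piv.
Context {C : SymMonCat} {H : C} (Hp : HopfMonoid H).

Definition m2 : Hom C (tens (tens H H) H) H := hm Hp ∘ (hm Hp ⊗ idm H).

(* the canonical iso H -> (e⊗H)⊗e, implicit in the paper's (p⊗1_H⊗p) *)
Definition unit_sandwich : Hom C H (tens (tens unit_ob H) unit_ob) :=
  runit_inv (tens unit_ob H) ∘ lunit_inv H.

Definition is_pivotal (p : Hom C unit_ob H) : Prop :=
  hDelta Hp ∘ p = (p ⊗ p) ∘ lunit_inv unit_ob
  /\ heps Hp ∘ p = idm unit_ob
  /\ m2 ∘ ((idm H ⊗ (hS Hp ∘ hS Hp)) ⊗ hS Hp) ∘ ((p ⊗ idm H) ⊗ p) ∘ unit_sandwich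
     = idm H.

Definition piv_Sinv (p : Hom C unit_ob H) : Hom C H H :=
  m2 ∘ ((idm H ⊗ hS Hp) ⊗ hS Hp) ∘ ((p ⊗ idm H) ⊗ p) ∘ unit_sandwich.

Definition piv_T (p : Hom C unit_ob H) : Hom C H H :=
  hm Hp ∘ (p ⊗ hS Hp) ∘ lunit_inv H.

End Piv.

(* All the identities are proved in convolution monoids Hom(X, H), X a comonoid,
   where two-sided convolution inverses are unique.  In Hom(H, H) one has
   T = (p ε) * S and S⁻¹ = (p ε) * S * (S p ε), and the pivotal axiom reads
   (p ε) * S² * (S p ε) = 1; since S is antimultiplicative, S T = S² * (S p ε),
   whence T T = 1.  On the comonoid H ⊗ H the multiplication is x * y for the two
   projections x, y, so that T m, m (T ⊗ S) τ and m (S⁻¹ ⊗ T) τ all equal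
   (p ε) * (S y) * (S x), using that p ε and S p ε are mutually inverse.  The
   dual statements about S (anticomultiplicativity, S η = η, ε S = ε) follow by
   applying the same results in the opposite category. *)

Set Implicit Arguments.

Lemma postcomp_congr {C : SymMonCat} {A B : C} (l r : Hom C A B) :
  l = r -> forall (D : C) (W : Hom C B D), W ∘ l = W ∘ r.
Proof. intros ->; reflexivity. Qed.

(* [arewrite L] rewrites with [L] modulo associativity of composition: goal and
   lemma are both put in left-associated form ([eapply eq_sym] first instantiates
   the binders of [L] with evars, so that [L] itself can be normalised), and when
   the left side of [L] occurs after a prefix [W] of a composite it is matched as
   [W ∘ lhs]. *)
Ltac cat_norm := rewrite ?comp_assoc.
Ltac cat_simpl := repeat (rewrite ?comp_idl, ?comp_idr, ?tensm_id); cat_norm.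
Ltac arewrite_in E := rewrite ?comp_assoc in E; rewrite E; clear E.
Ltac arewrite_bwd L := cat_norm;
  first [ rewrite <- L
        | let E := fresh in epose proof L as E; eapply eq_sym in E; arewrite_in E
        | let E := fresh in epose proof L as E; eapply eq_sym in E;
          eapply postcomp_congr in E; arewrite_in E ].
Ltac arewrite_fwd L := cat_norm;
  first [ rewrite L
        | let E := fresh in epose proof L as E; eapply eq_sym in E; symmetry in E; arewrite_in E
        | let E := fresh in epose proof L as E; eapply eq_sym in E; symmetry in E;
          eapply postcomp_congr in E; arewrite_in E ].

Tactic Notation "arewrite" "<-" uconstr(L) := arewrite_bwd L.
Tactic Notation "arewrite" uconstr(L) := arewrite_fwd L.

Section CategoryBasics.
Context {C : SymMonCat}.
Implicit Types A B X Y Z W : C.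

Lemma tensm_split_l {A B X Y} (f : Hom C A B) (g : Hom C X Y) :
  f ⊗ g = (f ⊗ idm Y) ∘ (idm A ⊗ g).
Proof. rewrite <- tensm_comp. cat_simpl. reflexivity. Qed.

Lemma tensm_split_r {A B X Y} (f : Hom C A B) (g : Hom C X Y) :
  f ⊗ g = (idm B ⊗ g) ∘ (f ⊗ idm X).
Proof. rewrite <- tensm_comp. cat_simpl. reflexivity. Qed.

Lemma tensm_interchange {A B X Y} (f : Hom C A B) (g : Hom C X Y) :
  (f ⊗ idm Y) ∘ (idm A ⊗ g) = (idm B ⊗ g) ∘ (f ⊗ idm X).
Proof. rewrite <- tensm_split_l, <- tensm_split_r. reflexivity. Qed.

Lemma tensm_comp_l {A B D X} (f : Hom C B D) (g : Hom C A B) :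
  (f ∘ g) ⊗ idm X = (f ⊗ idm X) ∘ (g ⊗ idm X).
Proof. rewrite <- tensm_comp. cat_simpl. reflexivity. Qed.

Lemma tensm_comp_r {A B D X} (f : Hom C B D) (g : Hom C A B) :
  idm X ⊗ (f ∘ g) = (idm X ⊗ f) ∘ (idm X ⊗ g).
Proof. rewrite <- tensm_comp. cat_simpl. reflexivity. Qed.

Lemma tensm_compl_post {A B D X Y} (f : Hom C B D) (g : Hom C A B) (h : Hom C X Y) :
  (f ∘ g) ⊗ h = (f ⊗ h) ∘ (g ⊗ idm X).
Proof. rewrite <- tensm_comp. cat_simpl. reflexivity. Qed.

Lemma tensm_compl_pre {A B D X Y} (f : Hom C B D) (g : Hom C A B) (h : Hom C X Y) :
  (f ∘ g) ⊗ h = (f ⊗ idm Y) ∘ (g ⊗ h).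
Proof. rewrite <- tensm_comp. cat_simpl. reflexivity. Qed.

Lemma tensm_compr_post {A B D X Y} (f : Hom C B D) (g : Hom C A B) (h : Hom C X Y) :
  h ⊗ (f ∘ g) = (h ⊗ f) ∘ (idm X ⊗ g).
Proof. rewrite <- tensm_comp. cat_simpl. reflexivity. Qed.

Lemma tensm_compr_pre {A B D X Y} (f : Hom C B D) (g : Hom C A B) (h : Hom C X Y) :
  h ⊗ (f ∘ g) = (idm Y ⊗ f) ∘ (h ⊗ g).
Proof. rewrite <- tensm_comp. cat_simpl. reflexivity. Qed.

Lemma tensm_inv_l {A B X} {f : Hom C B A} {g : Hom C A B} :
  f ∘ g = idm A -> (f ⊗ idm X) ∘ (g ⊗ idm X) = idm _.
Proof. intro Hfg. rewrite <- tensm_comp_l, Hfg. cat_simpl. reflexivity. Qed.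

Lemma tensm_inv_r {A B X} {f : Hom C B A} {g : Hom C A B} :
  f ∘ g = idm A -> (idm X ⊗ f) ∘ (idm X ⊗ g) = idm _.
Proof. intro Hfg. rewrite <- tensm_comp_r, Hfg. cat_simpl. reflexivity. Qed.

Lemma split_epi_cancel {A B X} (f g : Hom C B X) (i : Hom C A B) (j : Hom C B A) :
  i ∘ j = idm B -> f ∘ i = g ∘ i -> f = g.
Proof.
  intros Hij Hfg. rewrite <- (comp_idr _ _ _ f), <- (comp_idr _ _ _ g), <- Hij. cat_norm.
  rewrite Hfg. reflexivity.
Qed.

Lemma split_mono_cancel {A B X} (f g : Hom C X A) (i : Hom C A B) (j : Hom C B A) :
  j ∘ i = idm A -> i ∘ f = i ∘ g -> f = g.
Proof.
  intros Hij Hfg. rewrite <- (comp_idl _ _ _ f), <- (comp_idl _ _ _ g), <- Hij.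
  rewrite <- !comp_assoc, Hfg. reflexivity.
Qed.

Lemma assoc_inv_nat {A A' B B' X X'} (f : Hom C A A') (g : Hom C B B') (h : Hom C X X') :
  assoc_inv A' B' X' ∘ (f ⊗ (g ⊗ h)) = ((f ⊗ g) ⊗ h) ∘ assoc_inv A B X.
Proof.
  apply (split_mono_cancel _ _ (assoc A' B' X') (assoc_inv A' B' X')). { apply assoc_inv_l. }
  rewrite comp_assoc, assoc_inv_r, comp_idl, comp_assoc, assoc_nat, <- comp_assoc, assoc_inv_r.
  rewrite comp_idr. reflexivity.
Qed.

Lemma assoc_inv_nat_r A B X X' (h : Hom C X X') :
  (idm (tens A B) ⊗ h) ∘ assoc_inv A B X = assoc_inv A B X' ∘ (idm A ⊗ (idm B ⊗ h)).
Proof. rewrite <- (tensm_id _ A B). symmetry. apply assoc_inv_nat. Qed.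

Lemma lunit_inv_nat {A B} (f : Hom C A B) :
  lunit_inv B ∘ f = (idm unit_ob ⊗ f) ∘ lunit_inv A.
Proof.
  apply (split_mono_cancel _ _ (lunit B) (lunit_inv B)). { apply lunit_inv_l. }
  rewrite comp_assoc, lunit_inv_r, comp_idl, comp_assoc, <- lunit_nat, <- comp_assoc, lunit_inv_r.
  rewrite comp_idr. reflexivity.
Qed.

Lemma runit_inv_nat {A B} (f : Hom C A B) :
  runit_inv B ∘ f = (f ⊗ idm unit_ob) ∘ runit_inv A.
Proof.
  apply (split_mono_cancel _ _ (runit B) (runit_inv B)). { apply runit_inv_l. }
  rewrite comp_assoc, runit_inv_r, comp_idl, comp_assoc, <- runit_nat, <- comp_assoc, runit_inv_r.
  rewrite comp_idr. reflexivity.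
Qed.

Lemma tensm_unit_l_inj {A B} (f g : Hom C A B) : idm unit_ob ⊗ f = idm unit_ob ⊗ g -> f = g.
Proof.
  intro Hfg. apply (split_epi_cancel _ _ (lunit A) (lunit_inv A)). { apply lunit_inv_r. }
  rewrite !lunit_nat, Hfg. reflexivity.
Qed.

Lemma tensm_unit_r_inj {A B} (f g : Hom C A B) : f ⊗ idm unit_ob = g ⊗ idm unit_ob -> f = g.
Proof.
  intro Hfg. apply (split_epi_cancel _ _ (runit A) (runit_inv A)). { apply runit_inv_r. }
  rewrite !runit_nat, Hfg. reflexivity.
Qed.

Lemma postcomp_inv {A B D} {f : Hom C B A} {g : Hom C A B} (W : Hom C A D) :
  f ∘ g = idm A -> W ∘ f ∘ g = W.
Proof. intro Hfg. rewrite <- comp_assoc, Hfg. apply comp_idr. Qed.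

End CategoryBasics.

Ltac cancel_iso L := first [ rewrite L | rewrite (postcomp_inv _ L) ].
Ltac cancel_iso_tensm L :=
  first [ cancel_iso L | cancel_iso uconstr:(tensm_inv_l L) | cancel_iso uconstr:(tensm_inv_r L) ].
Ltac cancel_isos := cat_norm;
  repeat (first [ cancel_iso_tensm uconstr:(assoc_inv_l _ _ _ _)
                | cancel_iso_tensm uconstr:(assoc_inv_r _ _ _ _)
                | cancel_iso_tensm uconstr:(lunit_inv_l _ _)
                | cancel_iso_tensm uconstr:(lunit_inv_r _ _)
                | cancel_iso_tensm uconstr:(runit_inv_l _ _)
                | cancel_iso_tensm uconstr:(runit_inv_r _ _)
                | cancel_iso_tensm uconstr:(sym_invol _ _ _) ]; cat_simpl).

(** * Consequences of the coherence axioms *)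

Section Coherence.
Context {C : SymMonCat}.
Implicit Types A B X Y Z W : C.
Local Notation e := (@unit_ob C).

Lemma lunit_assoc A B : lunit (tens A B) ∘ assoc e A B = lunit A ⊗ idm B.
Proof.
  apply tensm_unit_l_inj.
  apply (split_epi_cancel _ _ (assoc e (tens e A) B ∘ (assoc e e A ⊗ idm B))
          ((assoc_inv e e A ⊗ idm B) ∘ assoc_inv e (tens e A) B)).
  { arewrite <- tensm_comp_l. arewrite assoc_inv_r. cat_simpl. rewrite assoc_inv_r. reflexivity. }
  rewrite tensm_comp_r. arewrite <- pentagon. arewrite triangle.
  rewrite <- (tensm_id _ A B). arewrite <- assoc_nat.
  rewrite <- triangle. rewrite tensm_comp_l. arewrite assoc_nat. reflexivity.
Qed.

Lemma runit_assoc A B : (idm A ⊗ runit B) ∘ assoc A B e = runit (tens A B).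
Proof.
  apply tensm_unit_r_inj.
  apply (split_mono_cancel _ _ (assoc A B e) (assoc_inv A B e)). { apply assoc_inv_l. }
  rewrite tensm_comp_l. arewrite assoc_nat. rewrite <- (triangle _ B e).
  rewrite tensm_comp_r. arewrite <- pentagon.
  rewrite <- (triangle _ (tens A B) e). rewrite <- (tensm_id _ A B). arewrite assoc_nat.
  reflexivity.
Qed.

Lemma lunit_unit_tens Y : lunit (tens e Y) = idm e ⊗ lunit Y.
Proof.
  apply (split_mono_cancel _ _ (lunit Y) (lunit_inv Y)). { apply lunit_inv_l. }
  apply lunit_nat.
Qed.

Lemma lunit_runit_unit : lunit e = runit e.
Proof.
  apply tensm_unit_r_inj. rewrite <- lunit_assoc, lunit_unit_tens. apply triangle.
Qed.

Lemma lunit_sym A : lunit A ∘ sym A e = runit A.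
Proof.
  apply tensm_unit_r_inj.
  apply (split_mono_cancel _ _ (sym A e) (sym e A)). { apply sym_invol. }
  symmetry. rewrite <- (triangle _ A e). arewrite sym_nat. rewrite <- lunit_assoc. arewrite hexagon.
  arewrite <- lunit_nat. rewrite tensm_comp_l. arewrite lunit_assoc. reflexivity.
Qed.

Lemma runit_sym A : runit A ∘ sym e A = lunit A.
Proof. rewrite <- lunit_sym. cancel_isos. reflexivity. Qed.

Lemma lunit_assoc_inv A B : (lunit A ⊗ idm B) ∘ assoc_inv e A B = lunit (tens A B).
Proof. rewrite <- lunit_assoc. cancel_isos. reflexivity. Qed.

Lemma assoc_lunit_inv A B : assoc e A B ∘ (lunit_inv A ⊗ idm B) = lunit_inv (tens A B).
Proof.
  apply (split_mono_cancel _ _ (lunit (tens A B)) (lunit_inv (tens A B))). { apply lunit_inv_l. }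
  arewrite lunit_assoc. cancel_isos. reflexivity.
Qed.

Lemma runit_assoc_inv A B : runit (tens A B) ∘ assoc_inv A B e = idm A ⊗ runit B.
Proof. rewrite <- runit_assoc. cancel_isos. reflexivity. Qed.

Lemma assoc_inv_runit_inv A B : assoc_inv A B e ∘ (idm A ⊗ runit_inv B) = runit_inv (tens A B).
Proof.
  apply (split_mono_cancel _ _ (runit (tens A B)) (runit_inv (tens A B))). { apply runit_inv_l. }
  arewrite runit_assoc_inv. cancel_isos. reflexivity.
Qed.

Lemma assoc_runit_inv A B : assoc A B e ∘ runit_inv (tens A B) = idm A ⊗ runit_inv B.
Proof. rewrite <- assoc_inv_runit_inv. cancel_isos. reflexivity. Qed.

Lemma triangle_assoc_inv A B : (runit A ⊗ idm B) ∘ assoc_inv A e B = idm A ⊗ lunit B.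
Proof. rewrite <- triangle. cancel_isos. reflexivity. Qed.

Lemma triangle_inv A B : assoc_inv A e B ∘ (idm A ⊗ lunit_inv B) = runit_inv A ⊗ idm B.
Proof.
  apply (split_mono_cancel _ _ (runit A ⊗ idm B) (runit_inv A ⊗ idm B)).
  { apply tensm_inv_l, runit_inv_l. }
  arewrite triangle_assoc_inv. cancel_isos. reflexivity.
Qed.

Lemma triangle_inv_assoc A B : assoc A e B ∘ (runit_inv A ⊗ idm B) = idm A ⊗ lunit_inv B.
Proof. rewrite <- triangle_inv. cancel_isos. reflexivity. Qed.

Lemma sym_runit_inv A : sym A e ∘ runit_inv A = lunit_inv A.
Proof.
  apply (split_mono_cancel _ _ (lunit A) (lunit_inv A)). { apply lunit_inv_l. }
  arewrite lunit_sym. cancel_isos. reflexivity.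
Qed.

Lemma sym_lunit_inv A : sym e A ∘ lunit_inv A = runit_inv A.
Proof.
  apply (split_mono_cancel _ _ (runit A) (runit_inv A)). { apply runit_inv_l. }
  arewrite runit_sym. cancel_isos. reflexivity.
Qed.

Lemma sym_unit_unit : sym e e = idm (tens e e).
Proof.
  apply (split_mono_cancel _ _ (lunit e) (lunit_inv e)). { apply lunit_inv_l. }
  rewrite lunit_sym, lunit_runit_unit. cat_simpl. reflexivity.
Qed.

(* Rearrangements of the pentagon, named after the associators on their left
   side: [a] is [assoc], [V] is [assoc_inv], [r] marks [idm _ ⊗ _]. *)
Lemma pentagon_V_ra_a A B X D :
  assoc_inv A B (tens X D) ∘ (idm A ⊗ assoc B X D) ∘ assoc A (tens B X) D
  = assoc (tens A B) X D ∘ (assoc_inv A B X ⊗ idm D).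
Proof.
  apply (split_mono_cancel _ _ (assoc A B (tens X D)) (assoc_inv A B (tens X D))).
  { apply assoc_inv_l. }
  apply (split_epi_cancel _ _ (assoc A B X ⊗ idm D) (assoc_inv A B X ⊗ idm D)).
  { apply tensm_inv_l, assoc_inv_r. }
  cancel_isos. rewrite pentagon. cat_norm. reflexivity.
Qed.

Lemma pentagon_V_ra A B X D :
  assoc_inv A B (tens X D) ∘ (idm A ⊗ assoc B X D)
  = assoc (tens A B) X D ∘ (assoc_inv A B X ⊗ idm D) ∘ assoc_inv A (tens B X) D.
Proof. rewrite <- pentagon_V_ra_a. cancel_isos. reflexivity. Qed.

Lemma pentagon_V_rV_a A B X D :
  assoc_inv A (tens B X) D ∘ (idm A ⊗ assoc_inv B X D) ∘ assoc A B (tens X D)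
  = (assoc A B X ⊗ idm D) ∘ assoc_inv (tens A B) X D.
Proof.
  apply (split_mono_cancel _ _ (assoc A (tens B X) D) (assoc_inv A (tens B X) D)).
  { apply assoc_inv_l. }
  apply (split_mono_cancel _ _ (idm A ⊗ assoc B X D) (idm A ⊗ assoc_inv B X D)).
  { apply tensm_inv_r, assoc_inv_l. }
  apply (split_epi_cancel _ _ (assoc (tens A B) X D) (assoc_inv (tens A B) X D)).
  { apply assoc_inv_r. }
  cancel_isos. rewrite pentagon. cat_norm. reflexivity.
Qed.

Lemma pentagon_V_rV_a_a A B X D :
  assoc_inv A (tens B X) D ∘ (idm A ⊗ assoc_inv B X D) ∘ assoc A B (tens X D)
    ∘ assoc (tens A B) X D
  = assoc A B X ⊗ idm D.
Proof. arewrite pentagon. cancel_isos. reflexivity. Qed.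

Lemma pentagon_rV_a_a A B X D :
  (idm A ⊗ assoc_inv B X D) ∘ assoc A B (tens X D) ∘ assoc (tens A B) X D
  = assoc A (tens B X) D ∘ (assoc A B X ⊗ idm D).
Proof. arewrite pentagon. cancel_isos. reflexivity. Qed.

Lemma sym_tens_r X Y Z : sym X (tens Y Z) =
  assoc_inv Y Z X ∘ (idm Y ⊗ sym X Z) ∘ assoc Y X Z ∘ (sym X Y ⊗ idm Z)
    ∘ assoc_inv X Y Z.
Proof.
  apply (split_mono_cancel _ _ (assoc Y Z X) (assoc_inv Y Z X)). { apply assoc_inv_l. }
  apply (split_epi_cancel _ _ (assoc X Y Z) (assoc_inv X Y Z)). { apply assoc_inv_r. }
  cancel_isos. arewrite hexagon. reflexivity.
Qed.

Lemma sym_tens_l X Y Z : sym (tens X Y) Z =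
  assoc Z X Y ∘ (sym X Z ⊗ idm Y) ∘ assoc_inv X Z Y ∘ (idm X ⊗ sym Y Z) ∘ assoc X Y Z.
Proof.
  apply (split_epi_cancel _ _ (sym Z (tens X Y)) (sym (tens X Y) Z)). { apply sym_invol. }
  rewrite sym_invol, (sym_tens_r Z X Y). cancel_isos. reflexivity.
Qed.

End Coherence.

(** * The middle interchange *)

Section MiddleInterchange.
Context {C : SymMonCat}.
Implicit Types A B X Y Z W : C.
Local Notation e := (@unit_ob C).

Definition lswap X Y Z : Hom C (tens X (tens Y Z)) (tens Y (tens X Z)) :=
  assoc Y X Z ∘ (sym X Y ⊗ idm Z) ∘ assoc_inv X Y Z.

Lemma mid_lswap A B X D :
  mid A B X D = assoc_inv A X (tens B D) ∘ (idm A ⊗ lswap B X D) ∘ assoc A B (tens X D).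
Proof. reflexivity. Qed.

Lemma lswap_nat {X X' Y Y' Z Z'} (a : Hom C X X') (b : Hom C Y Y') (c : Hom C Z Z') :
  lswap X' Y' Z' ∘ (a ⊗ (b ⊗ c)) = (b ⊗ (a ⊗ c)) ∘ lswap X Y Z.
Proof.
  unfold lswap. arewrite assoc_inv_nat. arewrite <- tensm_comp. cat_simpl. rewrite sym_nat.
  rewrite tensm_compl_post. arewrite assoc_nat. reflexivity.
Qed.

Lemma mid_nat {A A' B B' X X' D D'} (a : Hom C A A') (b : Hom C B B') (c : Hom C X X')
    (d : Hom C D D') :
  mid A' B' X' D' ∘ ((a ⊗ b) ⊗ (c ⊗ d)) = ((a ⊗ c) ⊗ (b ⊗ d)) ∘ mid A B X D.
Proof.
  rewrite !mid_lswap. arewrite assoc_nat. arewrite <- tensm_comp. cat_simpl. rewrite lswap_nat.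
  rewrite tensm_compr_post. arewrite assoc_inv_nat. reflexivity.
Qed.

Lemma lswap_tensm_id X Y Z W : lswap X Y Z ⊗ idm W =
  assoc_inv Y (tens X Z) W ∘ (idm Y ⊗ assoc_inv X Z W) ∘ lswap X Y (tens Z W)
    ∘ (idm X ⊗ assoc Y Z W) ∘ assoc X (tens Y Z) W.
Proof.
  unfold lswap. rewrite !tensm_comp_l.
  arewrite pentagon_V_ra_a.
  rewrite <- (tensm_id _ Z W). arewrite <- assoc_nat.
  arewrite pentagon_V_rV_a_a. reflexivity.
Qed.

Lemma lswap_tens_l X Y Z W : lswap (tens X Y) Z W =
  (idm Z ⊗ assoc_inv X Y W) ∘ lswap X Z (tens Y W) ∘ (idm X ⊗ lswap Y Z W)
    ∘ assoc X Y (tens Z W).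
Proof.
  unfold lswap. rewrite (sym_tens_l X Y Z). rewrite !tensm_comp_l, !tensm_comp_r.
  arewrite (pentagon_V_ra X Z Y W).
  rewrite <- (tensm_id _ Y W). arewrite <- assoc_nat.
  arewrite pentagon_rV_a_a.
  arewrite assoc_inv_nat. arewrite pentagon_V_rV_a. reflexivity.
Qed.

Lemma lswap_tens_r X Y Z W : lswap X (tens Y Z) W =
  assoc_inv Y Z (tens X W) ∘ (idm Y ⊗ lswap X Z W) ∘ lswap X Y (tens Z W)
    ∘ (idm X ⊗ assoc Y Z W).
Proof.
  unfold lswap. rewrite (sym_tens_r X Y Z). rewrite !tensm_comp_l, !tensm_comp_r.
  arewrite (pentagon_V_ra X Y Z W).
  rewrite <- (tensm_id _ Z W). arewrite <- assoc_nat.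
  arewrite pentagon. cancel_isos.
  arewrite <- assoc_nat. arewrite (pentagon_V_ra Y Z X W). cancel_isos. reflexivity.
Qed.

Lemma mid_assoc A B X D E F :
  assoc (tens A D) (tens B E) (tens X F) ∘ (mid A B D E ⊗ idm (tens X F))
    ∘ mid (tens A B) X (tens D E) F
  = (idm (tens A D) ⊗ mid B X E F) ∘ mid A (tens B X) D (tens E F)
    ∘ (assoc A B X ⊗ assoc D E F).
Proof.
  assert (lswap_coherence :
    assoc D (tens B E) (tens X F) ∘ (lswap B D E ⊗ idm (tens X F))
      ∘ assoc_inv B (tens D E) (tens X F) ∘ (idm B ⊗ lswap X (tens D E) F)
      ∘ assoc B X (tens (tens D E) F)
    = (idm D ⊗ mid B X E F) ∘ lswap (tens B X) D (tens E F)
      ∘ (idm (tens B X) ⊗ assoc D E F)).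
  { rewrite lswap_tensm_id, lswap_tens_r, lswap_tens_l, mid_lswap. cancel_isos.
    rewrite !tensm_comp_r. cancel_isos.
    arewrite (lswap_nat (idm _) (idm _) _).
    rewrite <- (tensm_id _ B X). arewrite assoc_nat. reflexivity. }
  rewrite !mid_lswap, !tensm_comp_l.
  arewrite <- pentagon_V_ra_a.
  arewrite (assoc_nat _ _ _ _ _ _ _ (idm A) (lswap B D E) (idm (tens X F))).
  arewrite <- pentagon_rV_a_a. cancel_isos.
  rewrite <- (tensm_id _ A B). arewrite assoc_nat. arewrite pentagon.
  rewrite <- (tensm_id _ A D). arewrite <- assoc_inv_nat.
  rewrite (tensm_split_r (assoc A B X) (assoc D E F)).
  rewrite <- (tensm_id _ A (tens B X)). arewrite assoc_nat. cat_simpl.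
  repeat arewrite <- tensm_comp_r. cat_norm.
  rewrite lswap_coherence, mid_lswap. cat_norm. reflexivity.
Qed.

Lemma lswap_unit_lunit A B : (idm A ⊗ lunit B) ∘ lswap e A B = lunit (tens A B).
Proof.
  unfold lswap. arewrite triangle. arewrite <- tensm_comp_l. rewrite runit_sym.
  apply lunit_assoc_inv.
Qed.

Lemma lswap_unit_runit B : (idm B ⊗ runit e) ∘ lswap e B e = sym e B ∘ (idm e ⊗ runit B).
Proof.
  unfold lswap. arewrite runit_assoc. arewrite <- runit_nat. arewrite runit_assoc_inv.
  reflexivity.
Qed.

Lemma lswap_runit_inv_unit B :
  lswap B e e ∘ (idm B ⊗ runit_inv e) = (idm e ⊗ runit_inv B) ∘ sym B e.
Proof.
  unfold lswap. arewrite assoc_inv_runit_inv. arewrite <- runit_inv_nat.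
  arewrite assoc_runit_inv. reflexivity.
Qed.

Lemma mid_lunit A B :
  (lunit A ⊗ lunit B) ∘ mid e e A B ∘ (lunit_inv e ⊗ idm (tens A B)) = lunit (tens A B).
Proof.
  rewrite mid_lswap, (tensm_split_r (lunit A)). arewrite lunit_assoc_inv.
  arewrite <- lunit_nat. arewrite lunit_assoc. cancel_isos.
  apply lswap_unit_lunit.
Qed.

Lemma mid_lunit_inv A B :
  (lunit e ⊗ idm (tens A B)) ∘ mid e A e B ∘ (lunit_inv A ⊗ lunit_inv B)
  = lunit_inv (tens A B).
Proof.
  rewrite mid_lswap. arewrite lunit_assoc_inv. arewrite <- lunit_nat. arewrite lunit_assoc.
  arewrite <- tensm_comp. cat_simpl. rewrite lunit_inv_r.
  unfold lswap. arewrite triangle_inv. arewrite <- tensm_comp_l. rewrite sym_runit_inv.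
  apply assoc_lunit_inv.
Qed.

Lemma mid_lunit_inv_split A B :
  mid e e A B ∘ (lunit_inv e ⊗ idm (tens A B)) ∘ lunit_inv (tens A B)
  = lunit_inv A ⊗ lunit_inv B.
Proof.
  apply (split_mono_cancel _ _ (lunit A ⊗ lunit B) (lunit_inv A ⊗ lunit_inv B)).
  { rewrite <- tensm_comp, !lunit_inv_l. apply tensm_id. }
  arewrite mid_lunit. cancel_isos. rewrite <- tensm_comp, !lunit_inv_r. symmetry. apply tensm_id.
Qed.

Lemma mid_runit A B :
  (runit A ⊗ runit B) ∘ mid A B e e ∘ (idm (tens A B) ⊗ runit_inv e) = runit (tens A B).
Proof.
  rewrite mid_lswap, <- (tensm_id _ A B). arewrite assoc_nat. arewrite <- tensm_comp_r.
  rewrite lswap_runit_inv_unit, tensm_comp_r, (tensm_split_l (runit A)).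
  arewrite assoc_inv_nat_r. arewrite <- (tensm_comp_r (idm e ⊗ runit B)). cancel_isos.
  arewrite triangle_assoc_inv. arewrite <- tensm_comp_r. rewrite lunit_sym.
  apply runit_assoc.
Qed.

Lemma mid_runit_inv A B :
  (idm (tens A B) ⊗ lunit e) ∘ mid A e B e ∘ (runit_inv A ⊗ runit_inv B)
  = runit_inv (tens A B).
Proof.
  rewrite lunit_runit_unit, mid_lswap, <- (tensm_id _ A B). arewrite <- assoc_inv_nat.
  arewrite <- tensm_comp_r. rewrite lswap_unit_runit, tensm_comp_r.
  arewrite <- assoc_nat. cat_simpl. arewrite <- tensm_comp. cat_simpl. rewrite runit_inv_r.
  cat_simpl. arewrite triangle_inv_assoc. arewrite <- tensm_comp_r. rewrite sym_lunit_inv.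
  apply assoc_inv_runit_inv.
Qed.

Lemma mid_unit_inner A B :
  (runit A ⊗ lunit B) ∘ mid A e e B ∘ (runit_inv A ⊗ lunit_inv B) = idm _.
Proof.
  rewrite mid_lswap. unfold lswap. rewrite sym_unit_unit. cat_simpl. cancel_isos.
  rewrite <- tensm_comp, runit_inv_r, lunit_inv_r. apply tensm_id.
Qed.

Lemma mid_unit_outer A B :
  (lunit B ⊗ runit A) ∘ mid e A B e ∘ (lunit_inv A ⊗ runit_inv B) = sym A B.
Proof.
  rewrite mid_lswap, (tensm_split_r (lunit B)). arewrite lunit_assoc_inv.
  arewrite <- lunit_nat. arewrite lunit_assoc.
  arewrite <- tensm_comp. cat_simpl. rewrite lunit_inv_r. cat_simpl.
  unfold lswap. arewrite runit_assoc. arewrite <- runit_nat. arewrite assoc_inv_runit_inv.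
  cancel_isos. reflexivity.
Qed.

End MiddleInterchange.

(** * Convolution *)

Record Comonoid {C : SymMonCat} (X : C) := {
  comult : Hom C X (tens X X);
  counit : Hom C X unit_ob;
  comult_coassoc : assoc X X X ∘ (comult ⊗ idm X) ∘ comult = (idm X ⊗ comult) ∘ comult;
  comult_counitl : (counit ⊗ idm X) ∘ comult = lunit_inv X;
  comult_counitr : (idm X ⊗ counit) ∘ comult = runit_inv X }.
Arguments comult {C X} _.
Arguments counit {C X} _.

Definition comon_morph {C : SymMonCat} {X Y : C} (K : Comonoid X) (L : Comonoid Y)
    (f : Hom C X Y) : Prop :=
  comult L ∘ f = (f ⊗ f) ∘ comult K /\ counit L ∘ f = counit K.

Section Comonoids.
Context {C : SymMonCat}.

Lemma counit_tens_comult_l {X : C} (K : Comonoid X) :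
  (counit K ⊗ counit K) ∘ comult K = lunit_inv unit_ob ∘ counit K.
Proof. rewrite tensm_split_r. arewrite (comult_counitl K). rewrite lunit_inv_nat. reflexivity. Qed.

Lemma counit_tens_comult_r {X : C} (K : Comonoid X) :
  (counit K ⊗ counit K) ∘ comult K = runit_inv unit_ob ∘ counit K.
Proof. rewrite tensm_split_l. arewrite (comult_counitr K). rewrite runit_inv_nat. reflexivity. Qed.

Lemma comp_counit_morph {X Y Z : C} (K : Comonoid X) (L : Comonoid Y) (k : Hom C X Y)
    (f : Hom C unit_ob Z) :
  comon_morph K L k -> f ∘ counit L ∘ k = f ∘ counit K.
Proof. intros [_ Hk]. rewrite <- comp_assoc, Hk. reflexivity. Qed.

End Comonoids.

Section Convolution.
Context {C : SymMonCat} {H : C} (Hp : HopfMonoid H).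
Local Notation m := (hm Hp).
Local Notation eta := (heta Hp).
Local Notation S := (hS Hp).

Definition conv {X : C} (K : Comonoid X) (f g : Hom C X H) : Hom C X H :=
  m ∘ (f ⊗ g) ∘ comult K.
Definition conv_unit {X : C} (K : Comonoid X) : Hom C X H := eta ∘ counit K.

Lemma conv_assoc {X : C} (K : Comonoid X) f g h :
  conv K (conv K f g) h = conv K f (conv K g h).
Proof.
  unfold conv. rewrite (tensm_compl_post (m ∘ (f ⊗ g))), (tensm_compl_pre m).
  rewrite (tensm_compr_post (m ∘ (g ⊗ h))), (tensm_compr_pre m).
  arewrite (m_assoc Hp). arewrite assoc_nat. arewrite (comult_coassoc K). reflexivity.
Qed.

Lemma conv_unitl {X : C} (K : Comonoid X) f : conv K (conv_unit K) f = f.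
Proof.
  unfold conv, conv_unit. rewrite tensm_compl_pre, (tensm_split_r (counit K)).
  arewrite (m_unitl Hp). arewrite <- lunit_nat. arewrite (comult_counitl K). cancel_isos.
  reflexivity.
Qed.

Lemma conv_unitr {X : C} (K : Comonoid X) f : conv K f (conv_unit K) = f.
Proof.
  unfold conv, conv_unit. rewrite tensm_compr_pre, (tensm_split_l _ (counit K)).
  arewrite (m_unitr Hp). arewrite <- runit_nat. arewrite (comult_counitr K). cancel_isos.
  reflexivity.
Qed.

Lemma conv_inv_uniq {X : C} (K : Comonoid X) f k g :
  conv K f k = conv_unit K -> conv K k g = conv_unit K -> f = g.
Proof.
  intros Hfk Hkg. rewrite <- (conv_unitr K f), <- Hkg, <- conv_assoc, Hfk. apply conv_unitl.
Qed.

Lemma conv_morph {X Y : C} (K : Comonoid X) (L : Comonoid Y) (k : Hom C X Y) f g :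
  comon_morph K L k -> conv K (f ∘ k) (g ∘ k) = conv L f g ∘ k.
Proof. intros [Hk _]. unfold conv. arewrite Hk. rewrite tensm_comp. cat_norm. reflexivity. Qed.

Definition hopf_comon : Comonoid H :=
  {| comult := hDelta Hp; counit := heps Hp; comult_coassoc := D_coassoc Hp;
     comult_counitl := D_counitl Hp; comult_counitr := D_counitr Hp |}.

Lemma conv_antipode_morph {X : C} (K : Comonoid X) (f : Hom C X H) :
  comon_morph K hopf_comon f ->
  conv K f (S ∘ f) = conv_unit K /\ conv K (S ∘ f) f = conv_unit K.
Proof.
  intros [Hf Hfe]. simpl in Hf, Hfe. unfold conv, conv_unit. split.
  - rewrite (tensm_compr_pre S). arewrite <- Hf. arewrite (antipode_r Hp). arewrite Hfe.
    reflexivity.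
  - rewrite (tensm_compl_pre S). arewrite <- Hf. arewrite (antipode_l Hp). arewrite Hfe.
    reflexivity.
Qed.

End Convolution.

Section TensorComonoid.
Context {C : SymMonCat} {H : C} (Hp : HopfMonoid H).
Local Notation m := (hm Hp).
Local Notation Dl := (hDelta Hp).
Local Notation eps := (heps Hp).
Local Notation S := (hS Hp).
Local Notation e := (@unit_ob C).

Definition tens_comult : Hom C (tens H H) (tens (tens H H) (tens H H)) :=
  mid H H H H ∘ (Dl ⊗ Dl).
Definition tens_counit : Hom C (tens H H) e := lunit e ∘ (eps ⊗ eps).

Lemma tens_comult_coassoc :
  assoc _ _ _ ∘ (tens_comult ⊗ idm (tens H H)) ∘ tens_comult
  = (idm (tens H H) ⊗ tens_comult) ∘ tens_comult.
Proof.
  unfold tens_comult.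
  rewrite (tensm_compl_post (mid H H H H)), (tensm_compr_post (mid H H H H)), <- (tensm_id _ H H).
  arewrite <- mid_nat. arewrite <- mid_nat. arewrite <- tensm_comp. arewrite <- tensm_comp.
  rewrite <- (D_coassoc Hp), !tensm_comp. cat_simpl. arewrite <- mid_assoc. reflexivity.
Qed.

Lemma tens_comult_counitl : (tens_counit ⊗ idm (tens H H)) ∘ tens_comult = lunit_inv (tens H H).
Proof.
  unfold tens_comult, tens_counit. rewrite tensm_compl_post, <- (tensm_id _ H H).
  arewrite <- mid_nat. arewrite <- tensm_comp. rewrite !(D_counitl Hp). cat_simpl.
  apply mid_lunit_inv.
Qed.

Lemma tens_comult_counitr : (idm (tens H H) ⊗ tens_counit) ∘ tens_comult = runit_inv (tens H H).
Proof.
  unfold tens_comult, tens_counit. rewrite tensm_compr_post, <- (tensm_id _ H H).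
  arewrite <- mid_nat. arewrite <- tensm_comp. rewrite !(D_counitr Hp). cat_simpl.
  apply mid_runit_inv.
Qed.

Definition tens_comon : Comonoid (tens H H) :=
  {| comult := tens_comult; counit := tens_counit; comult_coassoc := tens_comult_coassoc;
     comult_counitl := tens_comult_counitl; comult_counitr := tens_comult_counitr |}.

Definition proj1 : Hom C (tens H H) H := runit H ∘ (idm H ⊗ eps).
Definition proj2 : Hom C (tens H H) H := lunit H ∘ (eps ⊗ idm H).

Lemma proj1_morph : comon_morph tens_comon (hopf_comon Hp) proj1.
Proof.
  split; simpl; unfold proj1, tens_comult, tens_counit.
  - rewrite tensm_comp. arewrite <- mid_nat. arewrite <- tensm_comp. cat_simpl.
    rewrite (counit_tens_comult_r (hopf_comon Hp) : (eps ⊗ eps) ∘ Dl = runit_inv e ∘ eps),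
      (tensm_compr_pre _ _ Dl).
    arewrite mid_runit. arewrite runit_nat. rewrite (tensm_split_l Dl eps). cat_norm.
    reflexivity.
  - arewrite runit_nat. arewrite <- tensm_split_l. rewrite lunit_runit_unit. reflexivity.
Qed.

Lemma proj2_morph : comon_morph tens_comon (hopf_comon Hp) proj2.
Proof.
  split; simpl; unfold proj2, tens_comult, tens_counit.
  - rewrite tensm_comp. arewrite <- mid_nat. arewrite <- tensm_comp. cat_simpl.
    rewrite (counit_tens_comult_l (hopf_comon Hp) : (eps ⊗ eps) ∘ Dl = lunit_inv e ∘ eps),
      (tensm_compl_pre (lunit_inv e)).
    arewrite mid_lunit. arewrite lunit_nat. rewrite (tensm_split_r eps Dl). cat_norm.
    reflexivity.
  - arewrite lunit_nat. arewrite <- tensm_split_r. reflexivity.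
Qed.

Lemma mult_morph : comon_morph tens_comon (hopf_comon Hp) m.
Proof.
  split; simpl; unfold tens_comult, tens_counit.
  - rewrite (bialg_Dm Hp). cat_norm. reflexivity.
  - apply (bialg_em Hp).
Qed.

Lemma conv_proj12 (F G : Hom C H H) :
  conv Hp tens_comon (F ∘ proj1) (G ∘ proj2) = m ∘ (F ⊗ G).
Proof.
  unfold conv, proj1, proj2. simpl. unfold tens_comult.
  rewrite tensm_comp, (tensm_comp _ _ _ _ _ _ _ (runit H)).
  arewrite <- mid_nat. arewrite <- tensm_comp. rewrite (D_counitr Hp), (D_counitl Hp).
  arewrite mid_unit_inner. cat_simpl. reflexivity.
Qed.

Lemma conv_proj21 (F G : Hom C H H) :
  conv Hp tens_comon (F ∘ proj2) (G ∘ proj1) = m ∘ (F ⊗ G) ∘ sym H H.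
Proof.
  unfold conv, proj1, proj2. simpl. unfold tens_comult.
  rewrite tensm_comp, (tensm_comp _ _ _ _ _ _ _ (lunit H)).
  arewrite <- mid_nat. arewrite <- tensm_comp. rewrite (D_counitr Hp), (D_counitl Hp).
  arewrite mid_unit_outer. reflexivity.
Qed.

Lemma conv_proj_mult : conv Hp tens_comon proj1 proj2 = m.
Proof.
  pose proof (conv_proj12 (idm H) (idm H)) as E. rewrite !comp_idl, tensm_id, comp_idr in E.
  exact E.
Qed.

(* [S m] and [m (S ⊗ S) τ = (S y) * (S x)] are both convolution inverses of [m = x * y]. *)
Theorem antipode_antimult : S ∘ m = m ∘ (S ⊗ S) ∘ sym H H.
Proof.
  destruct (conv_antipode_morph mult_morph) as [_ Hm].
  destruct (conv_antipode_morph proj1_morph) as [Hx _].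
  destruct (conv_antipode_morph proj2_morph) as [Hy _].
  eapply conv_inv_uniq; [exact Hm |].
  rewrite <- conv_proj21, <- conv_proj_mult, conv_assoc, <- (conv_assoc _ _ proj2), Hy, conv_unitl.
  exact Hx.
Qed.

End TensorComonoid.

(** * The opposite category *)

Section Opposite.
Context (C : SymMonCat).

Lemma pentagon_inv (A B X D : C) :
  assoc_inv (tens A B) X D ∘ assoc_inv A B (tens X D)
  = (assoc_inv A B X ⊗ idm D) ∘ assoc_inv A (tens B X) D ∘ (idm A ⊗ assoc_inv B X D).
Proof.
  apply (split_mono_cancel _ _ (assoc (tens A B) X D) (assoc_inv (tens A B) X D)).
  { apply assoc_inv_l. }
  apply (split_mono_cancel _ _ (assoc A B (tens X D)) (assoc_inv A B (tens X D))).
  { apply assoc_inv_l. }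
  cancel_isos. arewrite pentagon. cancel_isos. reflexivity.
Qed.

Lemma hexagon_inv (A B X : C) :
  assoc_inv A B X ∘ sym (tens B X) A ∘ assoc_inv B X A
  = (sym B A ⊗ idm X) ∘ assoc_inv B A X ∘ (idm B ⊗ sym X A).
Proof. rewrite (sym_tens_l B X A). cancel_isos. reflexivity. Qed.

Definition op_cat : SymMonCat.
Proof.
  refine (@Build_SymMonCat (Ob C) (fun A B => Hom C B A) (fun A => idm A)
    (fun A B D g f => comp f g) _ _ _ (fun A B => tens A B) (fun A B X D f g => tensm f g) _ _
    unit_ob (fun A B X => assoc_inv A B X) (fun A B X => assoc A B X) _ _ _
    (fun A => lunit_inv A) (fun A => lunit A) _ _ _
    (fun A => runit_inv A) (fun A => runit A) _ _ _ _ _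
    (fun A B => sym B A) _ _ _); cbn; intros.
  - apply comp_idr.
  - apply comp_idl.
  - symmetry. apply comp_assoc.
  - apply tensm_id.
  - apply tensm_comp.
  - apply assoc_inv_l.
  - apply assoc_inv_r.
  - symmetry. apply assoc_inv_nat.
  - apply lunit_inv_l.
  - apply lunit_inv_r.
  - apply lunit_inv_nat.
  - apply runit_inv_l.
  - apply runit_inv_r.
  - apply runit_inv_nat.
  - rewrite pentagon_inv. cat_norm. reflexivity.
  - apply triangle_inv.
  - symmetry. apply sym_nat.
  - apply sym_invol.
  - rewrite hexagon_inv. cat_norm. reflexivity.
Defined.

End Opposite.

Section OppositeHopf.
Context {C : SymMonCat} {H : C} (Hp : HopfMonoid H).
Local Notation S := (hS Hp).

Definition op_hopf : @HopfMonoid (op_cat C) H.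
Proof.
  refine (@Build_HopfMonoid (op_cat C) H (hDelta Hp) (heps Hp) (hm Hp) (heta Hp) S
    _ _ _ _ _ _ _ _ _ _ _ _); unfold mid; cbn.
  - rewrite <- (D_coassoc Hp). cancel_isos. reflexivity.
  - apply (D_counitl Hp).
  - apply (D_counitr Hp).
  - arewrite (m_assoc Hp). cancel_isos. reflexivity.
  - apply (m_unitl Hp).
  - apply (m_unitr Hp).
  - rewrite (bialg_Dm Hp). unfold mid. cat_norm. reflexivity.
  - apply (bialg_De Hp).
  - apply (bialg_em Hp).
  - apply (bialg_ee Hp).
  - cat_norm. apply (antipode_l Hp).
  - cat_norm. apply (antipode_r Hp).
Defined.

Lemma antipode_anticomult : hDelta Hp ∘ S = (S ⊗ S) ∘ sym H H ∘ hDelta Hp.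
Proof.
  pose proof (antipode_antimult op_hopf) as E. cbn in E. rewrite E. arewrite sym_nat.
  reflexivity.
Qed.

Lemma antipode_unit : S ∘ heta Hp = heta Hp.
Proof.
  symmetry. transitivity (heta Hp ∘ heps Hp ∘ heta Hp).
  { rewrite <- comp_assoc, (bialg_ee Hp). cat_simpl. reflexivity. }
  rewrite <- (antipode_l Hp). arewrite (bialg_De Hp). arewrite <- tensm_comp. cat_simpl.
  rewrite (tensm_split_r (S ∘ heta Hp)). arewrite (m_unitr Hp). arewrite <- runit_nat.
  rewrite <- lunit_runit_unit. cancel_isos. reflexivity.
Qed.

End OppositeHopf.

Lemma counit_antipode {C : SymMonCat} {H : C} (Hp : HopfMonoid H) : heps Hp ∘ hS Hp = heps Hp.
Proof. exact (antipode_unit (op_hopf Hp)). Qed.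

(** * The pivotal antipode *)

Section Pivotal.
Context {C : SymMonCat} {H : C} (Hp : HopfMonoid H) (p : Hom C unit_ob H)
  (hp : is_pivotal Hp p).
Local Notation m := (hm Hp).
Local Notation eta := (heta Hp).
Local Notation Dl := (hDelta Hp).
Local Notation eps := (heps Hp).
Local Notation S := (hS Hp).
Local Notation e := (@unit_ob C).
Local Notation T := (piv_T Hp p).
Local Notation Sinv := (piv_Sinv Hp p).
Local Notation hopf_comon := (hopf_comon Hp).
Local Notation tens_comon := (tens_comon Hp).
Local Notation conv1 := (conv Hp hopf_comon).
Local Notation conv2 := (conv Hp tens_comon).

Lemma piv_comult : Dl ∘ p = (p ⊗ p) ∘ lunit_inv e.
Proof. apply hp. Qed.

Lemma piv_counit : eps ∘ p = idm e.
Proof. apply hp. Qed.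

Lemma conv_antipode_piv {X : C} (K : Comonoid X) :
  conv Hp K (S ∘ p ∘ counit K) (p ∘ counit K) = conv_unit Hp K.
Proof.
  unfold conv, conv_unit. rewrite tensm_comp. arewrite counit_tens_comult_l.
  rewrite (tensm_compl_pre S p). arewrite <- piv_comult.
  arewrite (antipode_l Hp). arewrite piv_counit. cat_simpl. reflexivity.
Qed.

Lemma conv_piv_l F : conv1 (p ∘ eps) F = m ∘ (p ⊗ F) ∘ lunit_inv H.
Proof. unfold conv. simpl. rewrite tensm_compl_post. arewrite (D_counitl Hp). reflexivity. Qed.

Lemma conv_antipode_piv_r F : conv1 F (S ∘ p ∘ eps) = m ∘ (F ⊗ (S ∘ p)) ∘ runit_inv H.
Proof. unfold conv. simpl. rewrite tensm_compr_post. arewrite (D_counitr Hp). reflexivity. Qed.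

Lemma piv_T_conv : T = conv1 (p ∘ eps) S.
Proof. rewrite conv_piv_l. reflexivity. Qed.

Lemma conv_piv_sandwich F :
  conv1 (conv1 (p ∘ eps) F) (S ∘ p ∘ eps)
  = m2 Hp ∘ ((idm H ⊗ F) ⊗ S) ∘ ((p ⊗ idm H) ⊗ p) ∘ unit_sandwich.
Proof.
  rewrite conv_antipode_piv_r, conv_piv_l. unfold m2, unit_sandwich.
  rewrite (tensm_compl_post (m ∘ (p ⊗ F))), (tensm_compl_pre m). arewrite <- runit_inv_nat.
  arewrite <- (tensm_comp _ _ _ _ _ _ _ (idm H ⊗ F) (p ⊗ idm H) S p).
  rewrite <- (tensm_split_r p F). reflexivity.
Qed.

Lemma piv_Sinv_conv : Sinv = conv1 (conv1 (p ∘ eps) S) (S ∘ p ∘ eps).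
Proof. rewrite conv_piv_sandwich. reflexivity. Qed.

Lemma pivotal_conv : conv1 (conv1 (p ∘ eps) (S ∘ S)) (S ∘ p ∘ eps) = idm H.
Proof. rewrite conv_piv_sandwich. apply hp. Qed.

Lemma antipode_piv_T : S ∘ T = conv1 (S ∘ S) (S ∘ p ∘ eps).
Proof.
  rewrite conv_antipode_piv_r. unfold piv_T. arewrite antipode_antimult. arewrite sym_nat.
  arewrite sym_lunit_inv. arewrite <- tensm_comp. reflexivity.
Qed.

Lemma piv_T_invol : T ∘ T = idm H.
Proof.
  unfold piv_T at 1. arewrite lunit_inv_nat. arewrite <- tensm_comp. cat_simpl.
  rewrite antipode_piv_T, <- conv_piv_l, <- conv_assoc. apply pivotal_conv.
Qed.

Lemma comult_piv_T : Dl ∘ T = (T ⊗ T) ∘ sym H H ∘ Dl.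
Proof.
  unfold piv_T. rewrite !tensm_comp. cat_norm.
  arewrite (bialg_Dm Hp). arewrite <- (tensm_comp _ _ _ _ _ _ _ Dl p Dl S).
  rewrite piv_comult, antipode_anticomult, tensm_comp.
  rewrite (tensm_compr_post (S ⊗ S) (sym H H) (p ⊗ p)). arewrite mid_nat.
  arewrite <- tensm_comp. cat_simpl. rewrite (tensm_split_l (lunit_inv e)).
  arewrite <- lunit_inv_nat. arewrite <- tensm_interchange. arewrite <- lunit_inv_nat.
  arewrite mid_lunit_inv_split. reflexivity.
Qed.

Lemma counit_piv_T : eps ∘ T = eps.
Proof.
  unfold piv_T. arewrite (bialg_em Hp). arewrite <- tensm_comp.
  rewrite piv_counit, counit_antipode. arewrite <- lunit_nat. cancel_isos. reflexivity.
Qed.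

Lemma piv_T_mult :
  T ∘ m = conv2 (conv2 (p ∘ counit tens_comon) (S ∘ proj2 Hp)) (S ∘ proj1 Hp).
Proof.
  rewrite piv_T_conv, <- (conv_morph _ _ _ (mult_morph Hp)).
  change eps with (counit hopf_comon). rewrite (comp_counit_morph _ (mult_morph Hp)).
  rewrite antipode_antimult, <- conv_proj21. symmetry. apply conv_assoc.
Qed.

Lemma mult_piv_T_antipode :
  m ∘ (T ⊗ S) ∘ sym H H
  = conv2 (conv2 (p ∘ counit tens_comon) (S ∘ proj2 Hp)) (S ∘ proj1 Hp).
Proof.
  rewrite <- conv_proj21, piv_T_conv, <- (conv_morph _ _ _ (proj2_morph Hp)).
  change eps with (counit hopf_comon). rewrite (comp_counit_morph _ (proj2_morph Hp)).
  reflexivity.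
Qed.

Lemma mult_piv_Sinv_T :
  m ∘ (Sinv ⊗ T) ∘ sym H H
  = conv2 (conv2 (p ∘ counit tens_comon) (S ∘ proj2 Hp)) (S ∘ proj1 Hp).
Proof.
  rewrite <- conv_proj21, piv_Sinv_conv, piv_T_conv.
  rewrite <- !(conv_morph _ _ _ (proj2_morph Hp)), <- (conv_morph _ _ _ (proj1_morph Hp)).
  change eps with (counit hopf_comon).
  rewrite (comp_counit_morph _ (proj2_morph Hp)), (comp_counit_morph _ (proj1_morph Hp)).
  rewrite (comp_counit_morph _ (proj2_morph Hp)).
  rewrite (conv_assoc _ _ _ (S ∘ p ∘ counit tens_comon)).
  rewrite <- (conv_assoc _ _ (S ∘ p ∘ counit tens_comon)).
  rewrite conv_antipode_piv, conv_unitl. reflexivity.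
Qed.

Lemma piv_T_mult_antipode : T ∘ m = m ∘ (T ⊗ S) ∘ sym H H.
Proof. rewrite piv_T_mult, mult_piv_T_antipode. reflexivity. Qed.

Lemma mult_piv_Sinv_T_antipode : m ∘ (Sinv ⊗ T) ∘ sym H H = m ∘ (T ⊗ S) ∘ sym H H.
Proof. rewrite mult_piv_Sinv_T, mult_piv_T_antipode. reflexivity. Qed.

Lemma piv_T_unit : T ∘ eta = p.
Proof.
  unfold piv_T. arewrite lunit_inv_nat. arewrite <- tensm_comp. cat_simpl.
  rewrite (antipode_unit Hp), (tensm_split_r p eta). arewrite (m_unitr Hp).
  arewrite <- runit_nat. rewrite <- lunit_runit_unit. cancel_isos. reflexivity.
Qed.

Lemma conv_piv_T_id : m ∘ (T ⊗ idm H) ∘ Dl = p ∘ eps.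
Proof.
  change (conv1 T (idm H) = p ∘ eps).
  assert (S_id : conv1 S (idm H) = conv_unit Hp hopf_comon) by apply (antipode_l Hp).
  rewrite piv_T_conv, conv_assoc, S_id. apply conv_unitr.
Qed.

Lemma conv_id_piv_T_sym : p ∘ eps = m ∘ (idm H ⊗ T) ∘ sym H H ∘ Dl.
Proof.
  assert (T_conv : T ∘ (m ∘ (idm H ⊗ T) ∘ sym H H ∘ Dl) = eta ∘ eps).
  { cat_norm. rewrite piv_T_mult_antipode. arewrite sym_nat. arewrite <- tensm_comp.
    cat_simpl. arewrite sym_invol. cat_simpl. rewrite piv_T_invol. apply (antipode_r Hp). }
  transitivity (T ∘ eta ∘ eps). { rewrite piv_T_unit. reflexivity. }
  rewrite <- comp_assoc, <- T_conv. cat_norm. rewrite piv_T_invol. cat_simpl. reflexivity.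
Qed.

End Pivotal.

Theorem lemma2p4 (C : SymMonCat) (H : C) (Hp : HopfMonoid H)
  (p : Hom C unit_ob H) (hp : is_pivotal Hp p) :
  let m := hm Hp in let eta := heta Hp in let D := hDelta Hp in
  let eps := heps Hp in let S := hS Hp in
  let T := piv_T Hp p in let Sinv := piv_Sinv Hp p in
  (* 1 *)
  T ∘ T = idm H
  (* 2 *)
  /\ D ∘ T = (T ⊗ T) ∘ sym H H ∘ D
  /\ eps ∘ T = eps
  (* 3 *)
  /\ T ∘ m = m ∘ (Sinv ⊗ T) ∘ sym H H
  /\ m ∘ (Sinv ⊗ T) ∘ sym H H = m ∘ (T ⊗ S) ∘ sym H H
  /\ T ∘ eta = p
  /\ m ∘ (T ⊗ idm H) ∘ D = p ∘ eps
  /\ p ∘ eps = m ∘ (idm H ⊗ T) ∘ sym H H ∘ D.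
Proof.
  cbv zeta. repeat match goal with |- _ /\ _ => split end.
  - exact (piv_T_invol hp).
  - exact (comult_piv_T hp).
  - exact (counit_piv_T hp).
  - rewrite (piv_T_mult_antipode Hp p). symmetry. exact (mult_piv_Sinv_T_antipode hp).
  - exact (mult_piv_Sinv_T_antipode hp).
  - exact (piv_T_unit Hp p).
  - exact (conv_piv_T_id Hp p).
  - exact (conv_id_piv_T_sym hp).
Qed.
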